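(* Let $q=p^m$ with $p$ an odd prime, $m\ge1$, and $q\equiv 1\pmod 6$. Let $f(x)=x^{q+2}$ on $\mathbb{F}_{q^2}$ and for $b\in\mathbb{F}_{q^2}$ put $\beta(b)=\beta_f(1,\tfrac14 b)$. Then for every $c\in\mathbb{F}_q^*$: $\beta(2c)=3$ if $c^2+1\in C_1$; $\beta(2c)\in\{0,3\}$ if $c^2+1\in C_0$; and $\beta(2c)\in\{0,1,2\}$ if $c^2+1=0$.
   Context: $\beta_f(a,b)$ is the number of $(x,y)\in\mathbb{F}_{q^2}^2$ with $f(x)-f(y)=b$ and $f(x+a)-f(y+a)=b$. $C_0$ (resp. $C_1$) denotes the set of nonzero squares (resp. non-squares) in $\mathbb{F}_q^*$. *)

From HB Require Import structures.
From mathcomp Require Import all_boot all_order all_algebra all_field.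
Set Implicit Arguments. Unset Strict Implicit. Unset Printing Implicit Defensive.
Import GRing.Theory.
Local Open Scope ring_scope.

(* K plays the role of F_{q^2}; F_q is its subfield {x | x^q = x}. *)
Definition in_Fq (K : finFieldType) (q : nat) (x : K) : bool := x ^+ q == x.

Definition in_C0 (K : finFieldType) (q : nat) (x : K) : bool :=
  [&& in_Fq q x, x != 0 & [exists y : K, in_Fq q y && (y ^+ 2 == x)]].
Definition in_C1 (K : finFieldType) (q : nat) (x : K) : bool :=
  [&& in_Fq q x, x != 0 & ~~ [exists y : K, in_Fq q y && (y ^+ 2 == x)]].

Definition beta_f (K : finFieldType) (f : K -> K) (a b : K) : nat :=
  #|[set xy : K * K | (f xy.1 - f xy.2 == b) && (f (xy.1 + a) - f (xy.2 + a) == b)]|.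

From HB Require Import structures.
From mathcomp Require Import all_boot all_order all_algebra all_field.
From mathcomp Require Import cyclic ring zify.
Set Implicit Arguments. Unset Strict Implicit. Unset Printing Implicit Defensive.
Import GRing.Theory.
Local Open Scope ring_scope.

(* Write x^q for the conjugate of x over F_q, so that f(x) = x^q x^2.  If
   (x, y) is counted by beta(2c), then y = -1 - x: otherwise u = x + y + 1 and
   w = x - y make w / w^q a root of t^2 + t + 1 of norm 1, which cannot exist
   since 3 does not divide q + 1.  Setting x = v - 1/2, beta(2c) counts the v
   with 4 v^q v^2 + v^q + 2 v = c.  Such a v either lies in F_q and solves the
   cubic 4 v^3 + 3 v = c, or satisfies v^q = c - v and (2v - c)^2 = c^2 + 1;
   the second kind gives two solutions if c^2 + 1 is a non-square of F_q and
   none if it is a nonzero square.  If r is one root of the cubic, the others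
   are (-r +- sqrt(-3) e) / 2 with e^2 = r^2 + 1, and
   c^2 + 1 = (r^2 + 1) (4 r^2 + 1)^2; as sqrt(-3) lies in F_q, the cubic has
   0 or 3 roots in F_q when c^2 + 1 is a square there and at most one
   otherwise.  One root does exist in the non-square case: c + sqrt(c^2 + 1)
   has norm -1, cubing permutes the elements of norm -1, and a cube root w
   yields the root (w + w^q) / 2. *)

Lemma finField_prim_root (F : finFieldType) : exists z : F, (#|F|.-1).-primitive_root z.
Proof.
have F_gt1 := finNzRing_gt1 F.
have : has (#|F|.-1).-primitive_root (enum [pred x : F | x != 0]).
  apply: has_prim_root; first by rewrite -ltnS prednK // ltnW.
  - apply/allP => x; rewrite mem_enum inE => x_neq0.
    by rewrite unity_rootE -(inj_eq (mulfI x_neq0)) -exprS prednK ?expf_card ?mulr1 // ltnW.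
  - exact: enum_uniq.
  - by rewrite -cardE -(cardC1 (0 : F)).
by case/hasP => z _ prim_z; exists z.
Qed.

Lemma cards3 (T : finType) (a b c : T) :
  a != b -> a != c -> b != c -> #|[set a; b; c]| = 3%N.
Proof.
move=> ab ac bc; rewrite (_ : [set a; b; c] = a |: [set b; c]).
  by rewrite cardsU1 cards2 !inE negb_or ab ac bc.
by apply/setP => x; rewrite !inE orbA.
Qed.

Section QuadraticExtension.

Variables (K : finFieldType) (q : nat).
Hypotheses (cardK : #|K| = (q ^ 2)%N) (q_pchar : [pchar K].-nat q).

Definition conjq (x : K) := x ^+ q.

Lemma q_gt1 : (1 < q)%N.
Proof. by have := finNzRing_gt1 K; rewrite cardK; case: q => [|[]]. Qed.

Lemma conjq_is_nmod_morphism : nmod_morphism conjq.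
Proof.
by split=> [|x y]; rewrite /conjq ?expr0n ?exprDn_pchar // eqn0Ngt ltnW ?q_gt1.
Qed.

HB.instance Definition _ :=
  GRing.isNmodMorphism.Build K K conjq conjq_is_nmod_morphism.

Lemma conjq_is_monoid_morphism : monoid_morphism conjq.
Proof. by split=> [|x y]; rewrite /conjq ?expr1n ?exprMn. Qed.

HB.instance Definition _ :=
  GRing.isMonoidMorphism.Build K K conjq conjq_is_monoid_morphism.

Lemma conjqK : involutive conjq.
Proof. by move=> x; rewrite /conjq -exprM mulnn -cardK expf_card. Qed.

Lemma conjq_sqr x : conjq (x ^+ 2) = x ^+ 2 -> conjq x = x \/ conjq x = - x.
Proof.
by rewrite rmorphXn => /eqP; rewrite eqf_sqr => /orP[] /eqP; [left | right].
Qed.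

Section Congruence.

Hypothesis q6 : (q %% 6 = 1)%N.

Lemma natf_neq0_coprime n : coprime n q -> n%:R != 0 :> K.
Proof.
move=> co_nq; have p_pr := pdiv_prime q_gt1.
have pchar_p : pdiv q \in [pchar K].
  by rewrite -(pnatE _ p_pr); apply: pnat_dvd q_pchar; apply: pdiv_dvd.
rewrite -(dvdn_pcharf pchar_p); apply: contraL co_nq => /coprime_dvdl co.
by apply/negP => /co; rewrite prime_coprime // pdiv_dvd.
Qed.

Lemma two_neq0 : 2%:R != 0 :> K.
Proof. by apply: natf_neq0_coprime; rewrite -coprime_modr (_ : q %% 2 = 1)%N //; lia. Qed.

Lemma three_neq0 : 3%:R != 0 :> K.
Proof. by apply: natf_neq0_coprime; rewrite -coprime_modr (_ : q %% 3 = 1)%N //; lia. Qed.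

Lemma four_neq0 : 4%:R != 0 :> K.
Proof. by rewrite (_ : 4%:R = 2%:R * 2%:R) ?mulf_neq0 ?two_neq0 // -natrM. Qed.

Lemma cube_root1_conjq w : w ^+ 3 = 1 -> conjq w = w.
Proof.
have q3 : (q %% 3 = 1)%N by lia.
by move=> w3; rewrite /conjq (divn_eq q 3) q3 exprD mulnC exprM w3 expr1n mul1r.
Qed.

Lemma norm1_cube_root1 r : r ^+ 3 = 1 -> r * conjq r = 1 -> r = 1.
Proof.
move=> r3; rewrite cube_root1_conjq // -expr2 => r2.
by rewrite -r3 exprS r2 mulr1.
Qed.

Lemma sqrtm3_Fq_exists : exists2 s : K, conjq s = s & s ^+ 2 = - 3%:R.
Proof.
have [z prim_z] := finField_prim_root K.
have three_dvd_n : (3 %| #|K|.-1)%N by rewrite cardK; lia.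
have prim_w := dvdn_prim_root prim_z three_dvd_n; set w := z ^+ _ in prim_w.
have w3 : w ^+ 3 = 1 := prim_expr_order prim_w.
have w_neq1 : w != 1 by rewrite -[w]expr1 -(prim_order_dvd prim_w).
have w2 : w ^+ 2 + w + 1 = 0.
  have : (w - 1) * (w ^+ 2 + w + 1) = w ^+ 3 - 1 by ring.
  by rewrite w3 subrr => /eqP; rewrite mulf_eq0 subr_eq0 (negbTE w_neq1) => /eqP.
exists (2%:R * w + 1); first by rewrite rmorphD rmorphM rmorph_nat rmorph1 /= cube_root1_conjq.
have -> : (2%:R * w + 1) ^+ 2 = 4%:R * (w ^+ 2 + w + 1) - 3%:R :> K by ring.
by rewrite w2 mulr0 sub0r.
Qed.

Lemma sqrtm3_neq0 (s : K) : s ^+ 2 = - 3%:R -> s != 0.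
Proof.
move=> s2; apply: contra_neq three_neq0 => s0.
by apply/eqP; rewrite -oppr_eq0 -s2 s0 expr0n.
Qed.

Lemma Fq_sqrt_exists x : conjq x = x -> exists e, e ^+ 2 = x.
Proof.
move=> cx; have [->|x_neq0] := eqVneq x 0; first by exists 0; rewrite expr0n.
have x_q1 : x ^+ q.-1 = 1.
  by apply: (mulfI x_neq0); rewrite -exprS prednK ?mulr1 // ltnW ?q_gt1.
have n_eq : (#|K|.-1 = q.+1 * q.-1)%N by rewrite cardK; have := q_gt1; nia.
have [z prim_z] := finField_prim_root K.
have xn : x ^+ #|K|.-1 = 1 by rewrite n_eq mulnC exprM x_q1 expr1n.
have [[i _] /= xi] := prim_rootP prim_z xn.
have : (#|K|.-1 %| i * q.-1)%N by rewrite (prim_order_dvd prim_z) exprM -xi x_q1.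
rewrite n_eq dvdn_pmul2r => [qS_dvd_i|]; last by have := q_gt1; lia.
have two_dvd_i : (2 %| i)%N by apply: dvdn_trans qS_dvd_i; lia.
by exists (z ^+ (i %/ 2)); rewrite -exprM divnK.
Qed.

Lemma cube_onto_norm_m1 a :
  a * conjq a = -1 -> exists2 w, w * conjq w = -1 & w ^+ 3 = a.
Proof.
pose T := [set w : K | w * conjq w == -1].
have T_neq0 w : w \in T -> w != 0.
  rewrite inE => /eqP; apply: contraPneq => ->.
  by rewrite mul0r => /esym/eqP; rewrite oppr_eq0 oner_eq0.
have cube_inj : {in T &, injective (fun w => w ^+ 3)}.
  move=> w1 w2 w1T w2T /= w3; have w2_neq0 := T_neq0 _ w2T.
  move: w1T w2T; rewrite !inE => /eqP w1n /eqP w2n.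
  suff : w1 / w2 = 1 by move/(congr1 ( *%R^~ w2)); rewrite divfK // mul1r.
  apply: norm1_cube_root1; first by rewrite expr_div_n w3 divff // expf_neq0.
  by rewrite rmorphM fmorphV /= mulrACA -invfM w1n w2n divff // oppr_eq0 oner_eq0.
have cube_T : [set w ^+ 3 | w in T] = T.
  apply/eqP; rewrite eqEcard card_in_imset // leqnn andbT.
  apply/subsetP => x /imsetP [w]; rewrite !inE => /eqP wn ->.
  by rewrite rmorphXn /= -exprMn wn; apply/eqP; ring.
move=> an; have : a \in T by rewrite inE an.
by rewrite -cube_T => /imsetP [w]; rewrite inE => /eqP wn ->; exists w.
Qed.

Lemma powq2E x : x ^+ (q + 2) = conjq x * x ^+ 2.
Proof. exact: exprD. Qed.

Lemma powq2_antipodal_pair (x y b : K) : b != 0 ->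
  x ^+ (q + 2) - y ^+ (q + 2) = b -> (x + 1) ^+ (q + 2) - (y + 1) ^+ (q + 2) = b ->
  y = - x - 1.
Proof.
rewrite !powq2E !rmorphD rmorph1 /= => b_neq0 e0 e1.
pose u := x + y + 1; pose w := x - y.
have cu : conjq u = conjq x + conjq y + 1 by rewrite !rmorphD rmorph1.
have cw : conjq w = conjq x - conjq y by rewrite rmorphB.
have uw : u * conjq w + conjq u * w + u * w = 0.
  rewrite cu cw -(subrr b) -{1}e1 -e0 /u /w; ring.
have w_neq0 : w != 0.
  apply: contra b_neq0 => /eqP; rewrite /w => /subr0_eq xy.
  by rewrite -e0 xy subrr.
have cw_neq0 : conjq w != 0 by rewrite fmorph_eq0.
suff u0 : u = 0.
  have -> : y = u - x - 1 by rewrite /u; ring.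
  by rewrite u0 sub0r.
clearbody u w; apply/eqP; apply: contraTT three_neq0 => u_neq0.
have uw_conj : u * w = conjq u * conjq w.
  have := congr1 conjq uw; rewrite !rmorphD !rmorphM rmorph0 /= !conjqK => uw'.
  by apply/eqP; rewrite -subr_eq0 -(subrr 0) -{1}uw -uw'; apply/eqP; ring.
pose r := w / conjq w.
have r_norm : r * conjq r = 1.
  by rewrite /r rmorphM fmorphV /= conjqK; field; rewrite w_neq0 cw_neq0.
have r2 : r ^+ 2 + r + 1 = 0.
  have : u * conjq w * (r ^+ 2 + r + 1)
         = (u * conjq w + conjq u * w + u * w) + w * (u * w - conjq u * conjq w) / conjq w.
    by rewrite /r; field.
  rewrite uw uw_conj subrr mulr0 mul0r addr0 => /eqP.
  by rewrite !mulf_eq0 (negbTE u_neq0) (negbTE cw_neq0) => /eqP.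
have r1 : r = 1.
  apply: norm1_cube_root1 r_norm; have : (r - 1) * (r ^+ 2 + r + 1) = r ^+ 3 - 1 by ring.
  by rewrite r2 mulr0 => /esym/eqP; rewrite subr_eq0 => /eqP.
by apply/negPn/eqP; rewrite -r2 r1 expr1n; ring.
Qed.

Definition antipodal_diff (v : K) : K := 4%:R * conjq v * v ^+ 2 + conjq v + 2%:R * v.

Lemma powq2_antipodal_diff v e : conjq e = e -> 4%:R * e ^+ 2 = 1 ->
  (v + e) ^+ (q + 2) - (- v + e) ^+ (q + 2) = antipodal_diff v / 2%:R.
Proof.
move=> ce e4; rewrite !powq2E !rmorphD rmorphN /= ce.
have -> : (conjq v + e) * (v + e) ^+ 2 - (- conjq v + e) * (- v + e) ^+ 2
          = antipodal_diff v / 2%:R + (4%:R * e ^+ 2 - 1) * (conjq v / 2%:R + v).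
  by rewrite /antipodal_diff; field; rewrite two_neq0.
by rewrite e4 subrr mul0r addr0.
Qed.

Lemma beta_powq2E c : c != 0 ->
  beta_f (fun x : K => x ^+ (q + 2)) 1 (c / 2%:R) = #|[set v | antipodal_diff v == c]|.
Proof.
move=> c_neq0; pose h : K := 2%:R^-1.
have ch : conjq h = h by rewrite fmorphV rmorph_nat.
have h4 : 4%:R * h ^+ 2 = 1 by rewrite /h; field; rewrite two_neq0.
have hh : 1 - h = h by rewrite /h; field; rewrite two_neq0.
have ch' : conjq (- h) = - h by rewrite rmorphN /= ch.
have h4' : 4%:R * (- h) ^+ 2 = 1 by rewrite sqrrN.
rewrite /beta_f -(card_imset _ (f := fun v => (v - h, - v - h))); last first.
  by move=> v w [/addIr].
apply: eq_card => -[x y]; rewrite inE /=; apply/andP/imsetP.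
- case=> /eqP e0 /eqP e1.
  have y_eq := powq2_antipodal_pair (mulf_neq0 c_neq0 (invr_neq0 two_neq0)) e0 e1.
  have x_eq : x = x + h + - h by rewrite addrK.
  have {}y_eq : y = - (x + h) + - h by rewrite y_eq /h; field; rewrite two_neq0.
  exists (x + h); last by rewrite -x_eq -y_eq.
  move: e0; rewrite inE {1}x_eq y_eq powq2_antipodal_diff //.
  by move=> /(mulIf (invr_neq0 two_neq0)) ->.
- case=> v; rewrite inE => /eqP pv [-> ->].
  by rewrite -!addrA (addrC (- h)) hh !powq2_antipodal_diff // pv; split.
Qed.

Definition cubic (v : K) : K := 4%:R * v ^+ 3 + 3%:R * v.

Definition Fq_cubic_roots (c : K) := [set v | (conjq v == v) && (cubic v == c)].

Definition twisted_roots (c : K) :=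
  [set v | (conjq v == c - v) && ((2%:R * v - c) ^+ 2 == c ^+ 2 + 1)].

Lemma antipodal_diff_eqE c v : conjq c = c ->
  (antipodal_diff v == c) =
  (conjq v == v) && (cubic v == c) ||
  (conjq v == c - v) && ((2%:R * v - c) ^+ 2 == c ^+ 2 + 1).
Proof.
move=> cc; apply/idP/idP => [/eqP pv | ].
  have pv' : 4%:R * v * conjq v ^+ 2 + v + 2%:R * conjq v = c.
    by rewrite -cc -pv /antipodal_diff !rmorphD !rmorphM !rmorph_nat /= conjqK; ring.
  have : (v - conjq v) * (4%:R * v * conjq v + 1) = 0.
    by rewrite -(subrr c) -{1}pv -pv' /antipodal_diff; ring.
  move/eqP; rewrite mulf_eq0 => /orP [/eqP/subr0_eq cv | /eqP vn].
    by rewrite -cv eqxx -pv /antipodal_diff -cv /cubic; apply/orP; left; apply/eqP; ring.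
  have c_eq : c = v + conjq v.
    rewrite -pv /antipodal_diff (_ : 4%:R * conjq v * v ^+ 2 = v * (4%:R * v * conjq v + 1) - v).
      by rewrite vn mulr0 sub0r; ring.
    by ring.
  apply/orP; right; apply/andP; split; apply/eqP; rewrite c_eq; first by ring.
  by rewrite -[RHS]subr0 -vn; ring.
case/orP => /andP [/eqP cv /eqP vc].
  by rewrite /antipodal_diff cv -vc /cubic; apply/eqP; ring.
rewrite /antipodal_diff cv -subr_eq0 (_ : _ - c = - v * ((2%:R * v - c) ^+ 2 - (c ^+ 2 + 1))).
  by rewrite vc subrr mulr0.
by ring.
Qed.

Lemma antipodal_diff_solutions c : conjq c = c ->
  [set v | antipodal_diff v == c] = Fq_cubic_roots c :|: twisted_roots c.
Proof. by move=> cc; apply/setP => v; rewrite !inE antipodal_diff_eqE. Qed.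

Lemma cubic_sqr_add1 r : cubic r ^+ 2 + 1 = (r ^+ 2 + 1) * (4%:R * r ^+ 2 + 1) ^+ 2.
Proof. by rewrite /cubic; ring. Qed.

Lemma cubic_half_trace w : w * conjq w = -1 ->
  cubic ((w + conjq w) / 2%:R) = (w ^+ 3 + conjq w ^+ 3) / 2%:R.
Proof.
move=> wn; have -> : cubic ((w + conjq w) / 2%:R) = (w ^+ 3 + conjq w ^+ 3) / 2%:R
    + 3%:R / 2%:R * (w + conjq w) * (w * conjq w + 1).
  by rewrite /cubic; field; rewrite two_neq0.
by rewrite wn addNr mulr0 addr0.
Qed.

Lemma Fq_cubic_root_exists c d : conjq c = c -> d ^+ 2 = c ^+ 2 + 1 -> conjq d = - d ->
  exists2 r, conjq r = r & cubic r = c.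
Proof.
move=> cc d2 cd; have cd_norm : (c + d) * conjq (c + d) = -1.
  rewrite rmorphD /= cc cd (_ : _ * _ = c ^+ 2 - d ^+ 2); last by ring.
  by rewrite d2; ring.
have [w wn w3] := cube_onto_norm_m1 cd_norm.
exists ((w + conjq w) / 2%:R).
  by rewrite rmorphM rmorphD fmorphV rmorph_nat /= conjqK addrC.
rewrite cubic_half_trace // -rmorphXn w3 rmorphD /= cc cd.
by field; rewrite two_neq0.
Qed.

Lemma cubic_roots r s e v : s ^+ 2 = - 3%:R -> e ^+ 2 = r ^+ 2 + 1 ->
  (cubic v == cubic r) =
  [|| v == r, v == (- r + s * e) / 2%:R | v == (- r - s * e) / 2%:R].
Proof.
move=> s2 e2; rewrite -subr_eq0.
have -> : cubic v - cubic r =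
    4%:R * (v - r) * (v - (- r + s * e) / 2%:R) * (v - (- r - s * e) / 2%:R)
    + (v - r) * ((s ^+ 2 + 3%:R) * e ^+ 2 - 3%:R * (e ^+ 2 - (r ^+ 2 + 1))).
  by rewrite /cubic; field; rewrite two_neq0.
rewrite s2 e2 addNr subrr mul0r mulr0 subr0 mulr0 addr0.
by rewrite !mulf_eq0 (negbTE four_neq0) /= !subr_eq0 -orbA.
Qed.

Lemma card_cubic_roots (r s e : K) : s ^+ 2 = - 3%:R -> e ^+ 2 = r ^+ 2 + 1 ->
  e != 0 -> 4%:R * r ^+ 2 + 1 != 0 ->
  #|[set r; (- r + s * e) / 2%:R; (- r - s * e) / 2%:R]| = 3%N.
Proof.
move=> s2 e2 e_neq0 r4_neq0.
have s_neq0 := sqrtm3_neq0 s2.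
have : (3%:R * r - s * e) * (3%:R * r + s * e) != 0.
  have -> : (3%:R * r - s * e) * (3%:R * r + s * e) = 9%:R * r ^+ 2 - s ^+ 2 * e ^+ 2 by ring.
  by rewrite s2 e2 (_ : _ - _ = 3%:R * (4%:R * r ^+ 2 + 1)) ?mulf_neq0 ?three_neq0 //; ring.
rewrite mulf_eq0 negb_or => /andP [rm_neq0 rp_neq0].
have half_neq0 (x : K) : x != 0 -> x / 2%:R != 0.
  by move=> x_neq0; rewrite mulf_neq0 ?invr_neq0 ?two_neq0.
apply: cards3; rewrite -subr_eq0.
- rewrite (_ : r - _ = (3%:R * r - s * e) / 2%:R) ?half_neq0 //.
  by field; rewrite two_neq0.
- rewrite (_ : r - _ = (3%:R * r + s * e) / 2%:R) ?half_neq0 //.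
  by field; rewrite two_neq0.
- rewrite (_ : (- r + s * e) / 2%:R - _ = s * e) ?mulf_neq0 //.
  by field; rewrite two_neq0.
Qed.

Lemma Fq_cubic_rootsE c r s e : conjq r = r -> cubic r = c ->
  conjq s = s -> s ^+ 2 = - 3%:R -> e ^+ 2 = r ^+ 2 + 1 ->
  Fq_cubic_roots c = if conjq e == e
                     then [set r; (- r + s * e) / 2%:R; (- r - s * e) / 2%:R]
                     else [set r].
Proof.
move=> cr <- cs s2 e2; have s_neq0 := sqrtm3_neq0 s2.
have fixed t : (conjq ((- r + s * t) / 2%:R) == (- r + s * t) / 2%:R) = (conjq t == t).
  rewrite rmorphM rmorphD rmorphN rmorphM fmorphV rmorph_nat /= cr cs.
  by rewrite (inj_eq (mulIf (invr_neq0 two_neq0))) (inj_eq (addrI _)) (inj_eq (mulfI s_neq0)).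
have fixed2 := fixed e.
have fixed3 : (conjq ((- r - s * e) / 2%:R) == (- r - s * e) / 2%:R) = (conjq e == e).
  by rewrite -mulrN fixed rmorphN eqr_opp.
apply/setP => v; rewrite [in LHS]inE (cubic_roots _ s2 e2).
have [-> | v_neq_r] := eqVneq v r; first by rewrite cr eqxx; case: ifP; rewrite !inE eqxx.
case: ifP => ce; rewrite !inE (negbTE v_neq_r) /=.
  by apply/andb_idl => /orP [] /eqP ->; rewrite ?fixed2 ?fixed3 ce.
by apply/andP => -[cv /orP [] /eqP vE]; move: cv; rewrite vE ?fixed2 ?fixed3 ce.
Qed.

Lemma twisted_rootsE c d : conjq c = c -> d ^+ 2 = c ^+ 2 + 1 ->
  twisted_roots c = if conjq d == - d then [set (c + d) / 2%:R; (c - d) / 2%:R] else set0.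
Proof.
move=> cc d2; apply/setP => v; rewrite inE -d2 eqf_sqr.
have vE t : (2%:R * v - c == t) = (v == (c + t) / 2%:R).
  by rewrite subr_eq addrC; apply/eqP/eqP => [<- | ->]; field; rewrite two_neq0.
have conj_half t : (conjq ((c + t) / 2%:R) == c - (c + t) / 2%:R) = (conjq t == - t).
  rewrite rmorphM rmorphD fmorphV rmorph_nat /= cc.
  rewrite (_ : c - (c + t) / 2%:R = (c - t) / 2%:R); last by field; rewrite two_neq0.
  by rewrite (inj_eq (mulIf (invr_neq0 two_neq0))) (inj_eq (addrI _)).
have conj_half_opp : (conjq ((c - d) / 2%:R) == c - (c - d) / 2%:R) = (conjq d == - d).
  by rewrite conj_half rmorphN eqr_opp.
rewrite !vE; case: ifP => cd; rewrite !inE.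
  by apply/andb_idl => /orP [] /eqP ->; rewrite ?conj_half_opp ?conj_half cd.
by apply/andP => -[cv /orP [] /eqP vE']; move: cv; rewrite vE' ?conj_half_opp ?conj_half cd.
Qed.

Lemma card_antipodal_diff_isotropic c : conjq c = c -> c ^+ 2 + 1 = 0 ->
  (#|[set v | antipodal_diff v == c]| <= 2)%N.
Proof.
move=> cc c21; have d2 : 0 ^+ 2 = c ^+ 2 + 1 by rewrite c21 expr0n.
rewrite antipodal_diff_solutions // (twisted_rootsE cc d2) rmorph0 oppr0 eqxx /= !addr0.
apply: leq_trans (subset_leq_card (_ : _ \subset [set c / 2%:R; - c])) _; last first.
  by rewrite cards2; case: (_ != _).
apply/subsetP => v; rewrite /Fq_cubic_roots !inE orbb => /orP [/andP [_ /eqP vc] | ->//].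
have : 4%:R * (v - c / 2%:R) ^+ 2 * (v + c) = 0.
  have -> : 4%:R * (v - c / 2%:R) ^+ 2 * (v + c) = cubic v - c - (c ^+ 2 + 1) * (3%:R * v - c).
    by rewrite /cubic; field; rewrite two_neq0.
  by rewrite vc c21 subrr mul0r subr0.
move/eqP; rewrite mulf_eq0 mulf_eq0 (negbTE four_neq0) expf_eq0 /= !subr_eq0 addr_eq0.
by case/orP => ->; rewrite ?orbT.
Qed.

Lemma card_antipodal_diff_C0 c : conjq c = c -> in_C0 q (c ^+ 2 + 1) ->
  #|[set v | antipodal_diff v == c]| \in [:: 0%N; 3%N].
Proof.
move=> cc /and3P [_ c21_neq0 /existsP [d /andP [/eqP cd /eqP d2]]].
have {}cd : conjq d = d := cd.
have d_neq0 : d != 0 by apply: contraNneq c21_neq0 => d0; rewrite -d2 d0 expr0n.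
have cd_opp : (conjq d == - d) = false.
  rewrite cd -addr_eq0 -mulr2n -mulr_natl mulf_eq0 (negbTE two_neq0).
  exact: negbTE.
rewrite antipodal_diff_solutions // (twisted_rootsE cc d2) cd_opp setU0.
have [-> | [r]] := set_0Vmem (Fq_cubic_roots c); first by rewrite cards0.
rewrite /Fq_cubic_roots inE => /andP [/eqP cr /eqP rc].
have c21 := cubic_sqr_add1 r; rewrite rc in c21.
have r4_neq0 : 4%:R * r ^+ 2 + 1 != 0.
  by apply: contraNneq c21_neq0 => r4; rewrite c21 r4 expr0n mulr0.
pose e := d / (4%:R * r ^+ 2 + 1).
have e2 : e ^+ 2 = r ^+ 2 + 1 by rewrite expr_div_n d2 c21 mulfK // expf_neq0.
have ce : conjq e = e.
  by rewrite rmorphM fmorphV rmorphD rmorphM rmorphXn !rmorph_nat rmorph1 /= cd cr.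
have e_neq0 : e != 0 by rewrite mulf_neq0 ?invr_neq0.
have [s cs s2] := sqrtm3_Fq_exists.
by rewrite -/(Fq_cubic_roots c) (Fq_cubic_rootsE cr rc cs s2 e2) ce eqxx card_cubic_roots.
Qed.

Lemma card_antipodal_diff_C1 c : conjq c = c -> in_C1 q (c ^+ 2 + 1) ->
  #|[set v | antipodal_diff v == c]| = 3%N.
Proof.
move=> cc /and3P [_ c21_neq0 /existsPn nsq].
have nonsq y : conjq y = y -> y ^+ 2 != c ^+ 2 + 1.
  by move=> cy; apply: contraNneq (nsq y) => y2; rewrite /in_Fq y2 eqxx andbT; apply/eqP.
have cc21 : conjq (c ^+ 2 + 1) = c ^+ 2 + 1 by rewrite rmorphD rmorphXn rmorph1 /= cc.
have [d d2] := Fq_sqrt_exists cc21.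
have cd : conjq d = - d.
  have cd2 : conjq (d ^+ 2) = d ^+ 2 by rewrite d2.
  have [cd | //] := conjq_sqr cd2.
  by have := nonsq d cd; rewrite d2 eqxx.
have d_neq0 : d != 0 by apply: contraNneq c21_neq0 => d0; rewrite -d2 d0 expr0n.
have [r cr rc] := Fq_cubic_root_exists cc d2 cd.
have cr21 : conjq (r ^+ 2 + 1) = r ^+ 2 + 1 by rewrite rmorphD rmorphXn rmorph1 /= cr.
have [e e2] := Fq_sqrt_exists cr21.
have ce : (conjq e == e) = false.
  apply/negbTE/eqP => ce; have cy : conjq (e * (4%:R * r ^+ 2 + 1)) = e * (4%:R * r ^+ 2 + 1).
    by rewrite rmorphM rmorphD rmorphM rmorphXn rmorph_nat rmorph1 /= ce cr.
  by have := nonsq _ cy; rewrite exprMn e2 -cubic_sqr_add1 rc eqxx.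
have [s cs s2] := sqrtm3_Fq_exists.
rewrite antipodal_diff_solutions // (Fq_cubic_rootsE cr rc cs s2 e2) ce.
rewrite (twisted_rootsE cc d2) cd eqxx cardsU1 cards2.
have half_conj : conjq ((c + d) / 2%:R) = (c - d) / 2%:R.
  by rewrite rmorphM rmorphD fmorphV rmorph_nat /= cc cd.
have half_conj' : conjq ((c - d) / 2%:R) = (c + d) / 2%:R by rewrite -half_conj conjqK.
have half_neq : (c + d) / 2%:R != (c - d) / 2%:R.
  rewrite -subr_eq0 (_ : _ - _ = d) //.
  by field; rewrite two_neq0.
have r_neq v : conjq v != v -> r != v by move=> cv; apply: contra_neq cv => <-.
by rewrite half_neq !inE negb_or !r_neq // ?half_conj ?half_conj' // eq_sym.
Qed.

End Congruence.
End QuadraticExtension.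

Theorem lemma9 (K : finFieldType) (p m q : nat) :
  prime p -> odd p -> (0 < m)%N -> q = (p ^ m)%N -> (q %% 6 = 1)%N ->
  #|K| = (q ^ 2)%N ->
  let f := fun x : K => x ^+ (q + 2) in
  let beta := fun b : K => beta_f f 1 (b / 4%:R) in
  forall c : K, in_Fq q c -> c != 0 ->
    [/\ in_C1 q (c ^+ 2 + 1) -> beta (2%:R * c) = 3%N,
        in_C0 q (c ^+ 2 + 1) -> beta (2%:R * c) \in [:: 0%N; 3%N]
      & c ^+ 2 + 1 = 0 -> beta (2%:R * c) \in [:: 0%N; 1%N; 2%N]].
Proof.
(* [odd p] and [0 < m] follow from [q %% 6 = 1] and [#|K| = q ^ 2]. *)
move=> p_pr _ _ qE q6 cardK f beta c /eqP cc c_neq0.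
have q_pchar : [pchar K].-nat q.
  by rewrite qE pnatX (pnatE _ p_pr) (@card_finPcharP _ p (m * 2)) // cardK qE expnM.
have -> : beta (2%:R * c) = #|[set v | antipodal_diff q v == c]|.
  rewrite -(beta_powq2E cardK q_pchar q6 c_neq0) /beta /f; congr beta_f.
  by field; rewrite (two_neq0 cardK q_pchar q6) (four_neq0 cardK q_pchar q6).
split=> [/(card_antipodal_diff_C1 cardK q_pchar q6 cc) //
        |/(card_antipodal_diff_C0 cardK q_pchar q6 cc) //|].
by move/(card_antipodal_diff_isotropic cardK q_pchar q6 cc); case: #|_| => [|[|[|]]].
Qed.
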